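(* If $q$ is an odd prime power then $f(X):=X^{q+2}+bX^q+cX$ does not permute $\mathbb{F}_{q^2}$ for any $b,c\in\mathbb{F}_{q^2}$ with $b\ne 0$. *)

From mathcomp Require Import all_boot all_order all_algebra all_field.
Set Implicit Arguments. Unset Strict Implicit. Unset Printing Implicit Defensive.
Import GRing.Theory.
Local Open Scope ring_scope.

Definition fpoly (F : fieldType) (q : nat) (b c : F) (x : F) : F :=
  x ^+ (q + 2) + b * x ^+ q + c * x.

(* If f permutes F_(q^2), then sum_x f(x)^(q-1) = sum_y y^(q-1) = 0, because
   a power sum sum_x x^e over a finite field with n + 1 elements vanishes unless
   n divides e > 0.  On the other hand f(x) = x (c + x^(q-1) (b + x^2)), and in
   the binomial expansion of f(x)^(q-1) the only monomial whose exponent is a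
   multiple of q^2 - 1 is x^(q^2-1), with coefficient C(q-1, (q-1)/2) b^((q-1)/2).
   In characteristic p, C(q-1, j) = (-1)^j for j < q, so the power sum equals
   -(-b)^((q-1)/2), which is nonzero when b <> 0. *)

From mathcomp Require Import all_boot all_order all_algebra all_field.
From mathcomp Require Import fingroup cyclic zify ring.
Set Implicit Arguments. Unset Strict Implicit. Unset Printing Implicit Defensive.
Import GRing.Theory.
Local Open Scope ring_scope.

Lemma prime_dvd_bin_pexp p k j : prime p -> (0 < j < p ^ k)%N -> (p %| 'C(p ^ k, j))%N.
Proof.
move=> p_pr /andP[j_gt0 lt_j_pk]; apply: contraT => p_ndvd.
have pk_dvd_j : (p ^ k %| j)%N.
  rewrite -(@Gauss_dvdl _ _ 'C(p ^ k, j)) ?coprimeXl ?prime_coprime //.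
  by rewrite -(prednK j_gt0) -mul_bin_diag dvdn_mulr.
by move: (dvdn_leq j_gt0 pk_dvd_j); rewrite leqNgt lt_j_pk.
Qed.

Lemma bin_predpX_pchar (R : nzRingType) p k j : p \in [pchar R] ->
  (j < p ^ k)%N -> 'C((p ^ k).-1, j)%:R = (-1) ^+ j :> R.
Proof.
move=> pR; have p_pr := pcharf_prime pR.
have pk_gt0 : (0 < p ^ k)%N by rewrite expn_gt0 prime_gt0.
elim: j => [|j IHj] lt_j_pk; first by rewrite bin0 expr0.
have /eqP : 'C(p ^ k, j.+1)%:R = 0 :> R.
  by apply/eqP; rewrite -(dvdn_pcharf pR) prime_dvd_bin_pexp.
rewrite -{1}(prednK pk_gt0) binS natrD IHj 1?ltnW // addr_eq0 => /eqP ->.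
by rewrite exprS mulN1r.
Qed.

Lemma natr_card_finNzRing (R : finNzRingType) : #|R|%:R = 0 :> R.
Proof. by rewrite -FinRing.zmodXgE -cardsT expg_cardG ?inE. Qed.

Section FinFieldPowerSums.

Variable F : finFieldType.
Local Notation n := #|F|.-1.

Lemma expf_card_pred (x : F) : x != 0 -> x ^+ n = 1.
Proof.
move=> x_neq0; apply: (mulfI x_neq0).
by rewrite -exprS prednK ?expf_card ?mulr1 // ltnW ?finNzRing_gt1.
Qed.

Lemma finField_prim_root : exists z : F, n.-primitive_root z.
Proof.
have n_gt0 : (0 < n)%N by rewrite -ltnS prednK ?finNzRing_gt1 // ltnW ?finNzRing_gt1.
have rs_unity : all n.-unity_root (enum (predC1 (0 : F))).
  by apply/allP => x; rewrite mem_enum unity_rootE => /expf_card_pred ->.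
have := has_prim_root n_gt0 rs_unity (enum_uniq _).
by rewrite -cardE cardC1 leqnn => /(_ isT)/hasP[z _]; exists z.
Qed.

Lemma sum_expr_finField e : (0 < e)%N ->
  \sum_(x : F) x ^+ e = if (n %| e)%N then -1 else 0.
Proof.
move=> e_gt0; have [z prim_z] := finField_prim_root.
rewrite (bigD1 0) //= expr0n gtn_eqF // add0r.
case: ifPn => [/dvdnP[d ->] | n_ndvd_e].
  rewrite (eq_bigr (fun=> 1)) => [|x /expf_card_pred x1]; last first.
    by rewrite mulnC exprM x1 expr1n.
  rewrite sumr_const cardC1; apply/eqP.
  by rewrite -addr_eq0 natr1 prednK ?natr_card_finNzRing // ltnW // finNzRing_gt1.
have z_neq0 : z != 0 by rewrite (prim_root_eq0 prim_z) -lt0n (prim_order_gt0 prim_z).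
have ze_neq1 : z ^+ e != 1 by rewrite -(prim_order_dvd prim_z).
have : \sum_(x | x != 0) x ^+ e = z ^+ e * \sum_(x | x != 0) x ^+ e.
  rewrite mulr_sumr (reindex_inj (mulfI z_neq0)) /=.
  by apply: eq_big => [x | x _]; rewrite ?mulf_eq0 ?(negbTE z_neq0) ?exprMn.
move/eqP; rewrite -subr_eq0 -{1}[\sum_(x | _) _]mul1r -mulrBl mulf_eq0 subr_eq0.
by rewrite eq_sym (negbTE ze_neq1) => /eqP.
Qed.

End FinFieldPowerSums.

Lemma dvdn_expansion_exponent m i j : (0 < m)%N -> (i <= m)%N -> (j <= i)%N ->
  (m * (m + 2) %| m * i.+1 + 2 * j)%N = (i == m) && (2 * j == m)%N.
Proof.
move=> m_gt0 le_im le_ji; apply/idP/andP => [/dvdnP[w] | [/eqP-> /eqP->]]; last first.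
  by rewrite addn2 mulnSr dvdnn.
case: w => [|[|w]]; [nia | | nia].
have [lt_im | ->] : (i < m)%N \/ i = m by lia.
  have : (m * i.+1 <= m * m)%N by rewrite leq_mul2l lt_im orbT.
  lia.
by rewrite mul1n [in RHS]addn2 [in RHS]mulnSr => /addnI ->.
Qed.

Lemma fpoly_expr (F : fieldType) m (b c x : F) :
  fpoly m.+1 b c x ^+ m = \sum_(i < m.+1) \sum_(j < i.+1)
    c ^+ (m - i) * b ^+ (i - j) *+ ('C(m, i) * 'C(i, j)) * x ^+ (m * i.+1 + 2 * j).
Proof.
have -> : fpoly m.+1 b c x = x * (c + x ^+ m * (b + x ^+ 2)).
  rewrite /fpoly addn2 !exprS; move: (x ^+ m) => y; ring.
rewrite exprMn exprDn mulr_sumr; apply: eq_bigr => i _.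
rewrite exprMn exprDn !mulr_sumr -sumrMnl mulr_sumr; apply: eq_bigr => j _.
rewrite mulnS exprD [x ^+ (m + _)]exprD -!exprM mulrnA !(mulrnAl, mulrnAr) mulrnAC.
congr (_ *+ _ *+ _); move: (x ^+ m) (x ^+ (m * i)) (x ^+ (2 * j)) => y yi x2j; ring.
Qed.

Lemma sum_fpoly_expr (F : finFieldType) h (b c : F) :
  (0 < h)%N -> #|F| = ((2 * h).+1 ^ 2)%N ->
  \sum_(x : F) fpoly (2 * h).+1 b c x ^+ (2 * h) = - (b ^+ h *+ 'C(2 * h, h)).
Proof.
move=> h_gt0 cardF; set m := (2 * h)%N.
have m_gt0 : (0 < m)%N by rewrite muln_gt0.
have cardF1 : #|F|.-1 = (m * (m + 2))%N by rewrite cardF; nia.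
under eq_bigr do rewrite fpoly_expr.
rewrite exchange_big; under eq_bigr do rewrite exchange_big.
rewrite (eq_bigr (fun i : 'I_m.+1 => \sum_(j < i.+1)
    if (i == m :> nat) && (2 * j == m)%N
    then - (c ^+ (m - i) * b ^+ (i - j) *+ ('C(m, i) * 'C(i, j))) else 0)); last first.
  move=> i _; apply: eq_bigr => j _.
  have le_im : (i <= m)%N := ltn_ord i.
  have le_ji : (j <= i)%N := ltn_ord j.
  rewrite -mulr_sumr sum_expr_finField; last by rewrite addn_gt0 muln_gt0 m_gt0.
  by rewrite cardF1 dvdn_expansion_exponent; [case: ifP; rewrite ?mulrN1 ?mulr0 | ..].
rewrite big_ord_recr /= big1 ?add0r => [|i _]; last by apply: big1 => j _; rewrite ltn_eqF.
have lt_h_m1 : (h < m.+1)%N by rewrite ltnS /m; lia.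
rewrite eqxx -big_mkcond (big_pred1 (Ordinal lt_h_m1)) => [|j] /=; last first.
  by rewrite -val_eqE /= eqn_pmul2l.
have -> : (m - h = h)%N by rewrite /m; lia.
by rewrite subnn expr0 mul1r binn mul1n.
Qed.

Theorem lemma2p5 (F : finFieldType) (p k : nat) :
  prime p -> (0 < k)%N -> odd (p ^ k) -> #|F| = ((p ^ k) ^ 2)%N ->
  forall b c : F, b != 0 -> ~ bijective (fpoly (p ^ k) b c).
Proof.
move=> p_pr k_gt0 q_odd cardF b c b_neq0 f_bij.
have pF : p \in [pchar F] by apply: (@card_finPcharP F p (k * 2)); rewrite ?cardF ?expnM.
have q_gt1 : (1 < p ^ k)%N by rewrite -(exp1n k) ltn_exp2r ?prime_gt1.
have [h q_eq] : exists h, (p ^ k = (2 * h).+1)%N.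
  by exists (p ^ k)./2; rewrite -{1}(odd_double_half (p ^ k)) q_odd add1n -mul2n.
have h_gt0 : (0 < h)%N by lia.
rewrite q_eq in cardF f_bij.
have sum_y : \sum_(y : F) y ^+ (2 * h) = 0.
  rewrite sum_expr_finField ?muln_gt0 // ifN //; apply/negP => /dvdn_leq.
  by rewrite muln_gt0 h_gt0 cardF; nia.
rewrite (reindex_inj (bij_inj f_bij)) /= in sum_y.
have := sum_fpoly_expr b c h_gt0 cardF; rewrite sum_y -mulr_natr.
have -> : 'C(2 * h, h)%:R = (-1) ^+ h :> F.
  by rewrite -[(2 * h)%N]/((2 * h).+1.-1) -q_eq (bin_predpX_pchar pF) // q_eq; lia.
move/eqP; rewrite eq_sym oppr_eq0 mulf_eq0 signr_eq0 orbF expf_eq0.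
by rewrite (negbTE b_neq0) andbF.
Qed.
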